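(* Let $R$ be any ring. Every family $(\varphi_n)$ of unsatisfiable CNF formulas (with polynomially many clauses in $n$) has a Hilbert-like family of IPS certificates $(C_n)$ in $\mathsf{VNP}^0_R$.
   Context: For a CNF $\varphi=\kappa_1\wedge\dots\wedge\kappa_m$ on $x_1,\dots,x_n$, clause $\kappa_i$ is translated into the polynomial $C_i(\vec x)$ equal to the product over its literals of $1-x_j$ for a positive literal $x_j$ and $x_j$ for a negative literal $\neg x_j$ (so a $0/1$ assignment satisfies $\kappa_i$ iff $C_i$ vanishes); the system also includes $x_j^2-x_j$. A Hilbert-like IPS certificate is a polynomial $\sum_i y_iG_i(\vec x)$ over $R$ in placeholder variables $y_i$ (one per equation) such that substituting the equations for the $y_i$ gives $1$. $\mathsf{VP}^0_R$: families of polynomials with polynomially many variables and polynomial degree computable by polynomial-size constant-free (constants $0,1,-1$ only) algebraic circuits over $R$; $\mathsf{VNP}^0_R$: families $g_n(\vec z)=\sum_{\vec e\in\{0,1\}^{\mathrm{poly}(n)}}f_n(\vec e,\vec z)$ with $(f_n)\in\mathsf{VP}^0_R$. *)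

From HB Require Import structures.
From mathcomp Require Import all_boot all_algebra.
From mathcomp Require Import mpoly.
Set Implicit Arguments. Unset Strict Implicit. Unset Printing Implicit Defensive.
Import GRing.Theory.
Local Open Scope ring_scope.

Definition poly_bounded (g : nat -> nat) : Prop :=
  exists c k : nat, forall n, (g n <= c * n ^ k + c)%N.

(* A circuit is a straight-line program: gate number j may only refer to the
   values of gates 0..j-1. Constants are restricted to 0, 1, -1. *)
Inductive gate : Type :=
  | GInput of nat
  | GZero | GOne | GMinusOne
  | GAdd of nat & nat
  | GMul of nat & nat.

Definition circuit := seq gate.

Section CircuitEval.
Variables (R : comNzRingType) (k : nat).

(* the input variable z_i of {mpoly R[k]} (0 if i is out of range) *)
Definition in_var (i : nat) : {mpoly R[k]} :=
  if insub i is Some j then 'X_j else 0.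

(* value of gate g given the values [vals] of the previous gates
   (a reference to a non-existing gate reads as 0) *)
Definition gate_val (vals : seq {mpoly R[k]}) (g : gate) : {mpoly R[k]} :=
  match g with
  | GInput i => in_var i
  | GZero => 0
  | GOne => 1
  | GMinusOne => -1
  | GAdd a b => vals`_a + vals`_b
  | GMul a b => vals`_a * vals`_b
  end.

Definition circuit_vals (c : circuit) : seq {mpoly R[k]} :=
  foldl (fun vals g => rcons vals (gate_val vals g)) [::] c.

Definition circuit_out (c : circuit) : {mpoly R[k]} := last 0 (circuit_vals c).

End CircuitEval.

Definition VP0 (R : comNzRingType) (v : nat -> nat)
    (f : forall n, {mpoly R[v n]}) : Prop :=
  [/\ poly_bounded v,
      poly_bounded (fun n => msize (f n))  (* msize = total degree + 1 *)
    & exists c : nat -> circuit,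
        poly_bounded (fun n => size (c n)) /\
        forall n, circuit_out R (v n) (c n) = f n].

Definition subst_bool (R : comNzRingType) (p v : nat) (e : {ffun 'I_p -> bool})
    (f : {mpoly R[p + v]}) : {mpoly R[v]} :=
  f \mPo [tuple match split i with
                | inl j => (e j)%:R
                | inr j => 'X_j
                end | i < p + v].

Definition VNP0 (R : comNzRingType) (v : nat -> nat)
    (g : forall n, {mpoly R[v n]}) : Prop :=
  exists (p : nat -> nat) (f : forall n, {mpoly R[p n + v n]}),
    [/\ poly_bounded p,
        @VP0 R (fun n => (p n + v n)%N) f
      & forall n, g n = \sum_(e : {ffun 'I_(p n) -> bool}) @subst_bool R (p n) (v n) e (f n)].

(* A literal over x_0..x_{n-1} is a pair (j, b): b = true is x_j, b = false is ~x_j.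
   A clause is a finite set of literals, a CNF is a list of clauses. *)
Definition literal (n : nat) := ('I_n * bool)%type.
Definition clause (n : nat) := {set literal n}.
Definition cnf (n : nat) := seq (clause n).

Definition sat_clause n (a : 'I_n -> bool) (k : clause n) : bool :=
  [exists l in k, a l.1 == l.2].
Definition sat_cnf n (a : 'I_n -> bool) (phi : cnf n) : bool :=
  all (sat_clause a) phi.
Definition unsat n (phi : cnf n) : Prop := forall a : 'I_n -> bool, ~~ sat_cnf a phi.

Definition clause_poly (R : comNzRingType) n (k : clause n) : {mpoly R[n]} :=
  \prod_(l in k) (if l.2 then 1 - 'X_l.1 else 'X_l.1).

Definition cnf_system (R : comNzRingType) n (phi : cnf n) (i : 'I_(size phi + n))
    : {mpoly R[n]} :=
  match split i with
  | inl k => @clause_poly R n (nth set0 phi k)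
  | inr j => 'X_j ^+ 2 - 'X_j
  end.

(* Polynomials in variables x_0..x_{n-1}, y_0..y_{s-1} live in {mpoly R[n + s]}:
   x_j is 'X_(lshift s j), y_i is 'X_(rshift n i). *)
Definition x_embed (R : comNzRingType) n s (G : {mpoly R[n]}) : {mpoly R[n + s]} :=
  G \mPo [tuple 'X_(lshift s j) | j < n].

Definition y_subst (R : comNzRingType) n s (F : 'I_s -> {mpoly R[n]})
    (C : {mpoly R[n + s]}) : {mpoly R[n]} :=
  C \mPo [tuple match split i with
                | inl j => 'X_j
                | inr j => F j
                end | i < n + s].

Definition hilbert_like_cert (R : comNzRingType) n (phi : cnf n)
    (C : {mpoly R[n + (size phi + n)]}) : Prop :=
  (exists G : 'I_(size phi + n) -> {mpoly R[n]},
      C = \sum_(i < size phi + n) 'X_(rshift n i) * @x_embed R n (size phi + n) (G i))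
  /\ @y_subst R n (size phi + n) (@cnf_system R n phi) C = 1.

From HB Require Import structures.
From mathcomp Require Import all_boot all_algebra.
From mathcomp Require Import mpoly.
From mathcomp Require Import zify ring.
Set Implicit Arguments. Unset Strict Implicit. Unset Printing Implicit Defensive.
Import GRing.Theory.

(* For a Boolean vector [e], let
     H_k(e, x) = C_k(e) * prod_(k' < k) (1 - C_k'(e)) * prod_(j not in clause k) [e_j = x_j],
   where [e_j = x_j] is the polynomial e_j x_j + (1 - e_j) (1 - x_j). The
   certificate is sum_e sum_k y_k H_k(e, x): a Boolean sum of a single formula of
   polynomial size, hence in VNP^0. For Boolean [e], C_k(e) is 1 exactly when [e]
   falsifies clause [k], so H_k(e, x) vanishes unless [k] is the first clause
   falsified by [e], which exists since the formula is unsatisfiable; for that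
   [k], C_k(x) H_k(e, x) is the indicator polynomial of [e]. Substituting C_k for
   y_k thus yields the sum of all indicator polynomials, which is 1. *)

Section PolyBounded.
Local Open Scope nat_scope.

Lemma poly_boundedS g :
  poly_bounded g <-> exists c k, forall n, g n <= c * n.+1 ^ k.
Proof.
split=> -[c [k g_le]].
- exists (2 * c), k => n.
  have : n ^ k <= n.+1 ^ k by case: k {g_le} => // k; rewrite leq_exp2r.
  have := expn_gt0 n.+1 k; have := g_le n; nia.
- exists (c * 2 ^ k), k => n.
  have : n.+1 ^ k <= 2 ^ k * n ^ k + 2 ^ k.
    case: n => [|n]; first by rewrite exp1n; have := expn_gt0 2 k; lia.
    rewrite -expnMn; apply: leq_trans (leq_addr _ _).
    by case: k {g_le} => // k; rewrite leq_exp2r //; lia.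
  have := g_le n; nia.
Qed.

Lemma poly_bounded_le g h :
  (forall n, g n <= h n) -> poly_bounded h -> poly_bounded g.
Proof. by move=> gh [c [k h_le]]; exists c, k => n; apply: leq_trans (gh n) _. Qed.

Lemma poly_boundedD g h :
  poly_bounded g -> poly_bounded h -> poly_bounded (fun n => g n + h n).
Proof.
move=> /poly_boundedS[c1 [k1 g_le]] /poly_boundedS[c2 [k2 h_le]].
apply/poly_boundedS; exists (c1 + c2), (k1 + k2) => n.
have : n.+1 ^ k1 <= n.+1 ^ (k1 + k2) by rewrite leq_pexp2l // leq_addr.
have : n.+1 ^ k2 <= n.+1 ^ (k1 + k2) by rewrite leq_pexp2l // leq_addl.
have := g_le n; have := h_le n; nia.
Qed.

Lemma poly_boundedM g h :
  poly_bounded g -> poly_bounded h -> poly_bounded (fun n => g n * h n).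
Proof.
move=> /poly_boundedS[c1 [k1 g_le]] /poly_boundedS[c2 [k2 h_le]].
apply/poly_boundedS; exists (c1 * c2), (k1 + k2) => n.
by rewrite expnD; have := leq_mul (g_le n) (h_le n); lia.
Qed.

Lemma poly_bounded_cst c : poly_bounded (fun _ => c).
Proof. by exists c, 0 => n; lia. Qed.

Lemma poly_bounded_id : poly_bounded id.
Proof. by exists 1, 1 => n; rewrite expn1; lia. Qed.

End PolyBounded.

Section Expressions.
Local Open Scope ring_scope.

Inductive expr : Type :=
  | EVar of nat | EZero | EOne | EMinusOne
  | EAdd of expr & expr | EMul of expr & expr.

Fixpoint eval_expr (A : comNzRingType) (env : nat -> A) (f : expr) : A :=
  match f with
  | EVar i => env i | EZero => 0 | EOne => 1 | EMinusOne => -1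
  | EAdd a b => eval_expr env a + eval_expr env b
  | EMul a b => eval_expr env a * eval_expr env b
  end.

Fixpoint expr_size (f : expr) : nat :=
  match f with
  | EAdd a b | EMul a b => (expr_size a + expr_size b).+1
  | _ => 1%N
  end.

(* [expr_circuit o f] computes [f] in a circuit whose first gate is gate
   number [o]; the value of [f] is then the gate [o + expr_size f - 1]. *)
Fixpoint expr_circuit (o : nat) (f : expr) : circuit :=
  match f with
  | EVar i => [:: GInput i] | EZero => [:: GZero] | EOne => [:: GOne]
  | EMinusOne => [:: GMinusOne]
  | EAdd a b => expr_circuit o a ++ expr_circuit (o + expr_size a) b
                 ++ [:: GAdd (o + expr_size a).-1 (o + expr_size a + expr_size b).-1]
  | EMul a b => expr_circuit o a ++ expr_circuit (o + expr_size a) b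
                 ++ [:: GMul (o + expr_size a).-1 (o + expr_size a + expr_size b).-1]
  end.

Lemma expr_size_gt0 f : (0 < expr_size f)%N.
Proof. by case: f. Qed.

Lemma size_expr_circuit o f : size (expr_circuit o f) = expr_size f.
Proof. by elim: f o => //= a IHa b IHb o; rewrite !size_cat IHa IHb /= addn1 addnS. Qed.

Lemma nth_cat_last (T : Type) (x0 : T) (s t : seq T) : (0 < size t)%N ->
  nth x0 (s ++ t) (size s + size t).-1 = last x0 t.
Proof.
by case: t => // y t _; rewrite nth_cat addnS ltnNge leq_addr /= addKn nth_last.
Qed.

Section Evaluation.
Variables (R : comNzRingType) (k : nat).

Local Notation run := (foldl (fun vals g => rcons vals (@gate_val R k vals g))).

Lemma run_expr_circuit f (vals : seq {mpoly R[k]}) :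
  exists2 ws, run vals (expr_circuit (size vals) f) = vals ++ ws &
    size ws = expr_size f /\ last 0 ws = eval_expr (in_var R k) f.
Proof.
elim: f vals => [i|||| a IHa b IHb | a IHa b IHb] vals /=.
1-4: by rewrite -cats1; eexists.
all: have [wa run_a [sz_wa val_wa]] := IHa vals.
all: have [wb run_b [sz_wb val_wb]] := IHb (vals ++ wa).
all: rewrite size_cat sz_wa in run_b.
all: rewrite !foldl_cat run_a run_b /= -cats1 -!catA.
all: eexists; first reflexivity.
all: rewrite /= !size_cat sz_wa sz_wb addn1 addnS !last_cat /= -sz_wa -sz_wb catA.
all: split=> //; rewrite -size_cat nth_cat_last ?sz_wb ?expr_size_gt0 // val_wb.
all: have wa_gt0 : (0 < size wa)%N by rewrite sz_wa expr_size_gt0.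
all: by rewrite nth_cat size_cat prednK ?ltn_addl // leqnn nth_cat_last // val_wa.
Qed.

Lemma circuit_out_expr f : circuit_out R k (expr_circuit 0 f) = eval_expr (in_var R k) f.
Proof.
have [ws run_f [_ <-]] := run_expr_circuit f [::].
by rewrite /circuit_out /circuit_vals run_f.
Qed.

Lemma msize_eval_expr f : (msize (eval_expr (in_var R k) f) <= 2 * expr_size f)%N.
Proof.
elim: f => [i|||| a IHa b IHb | a IHa b IHb] /=.
- rewrite /in_var; case: insubP => [j _ _|_]; last by rewrite msize0.
  by rewrite msizeX mdeg1.
- by rewrite msize0.
- by rewrite msize1.
- by rewrite msizeN msize1.
- by apply: leq_trans (msizeD_le _ _) _; rewrite geq_max; apply/andP; split; lia.
- by apply: leq_trans (msizeM_le _ _) _; lia.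
Qed.

End Evaluation.

Lemma rmorph_eval_expr (A B : comNzRingType) (f : {rmorphism A -> B}) env e :
  f (eval_expr env e) = eval_expr (f \o env) e.
Proof.
elim: e => [i|||| a IHa b IHb | a IHa b IHb] //=.
- exact: rmorph0.
- exact: rmorph1.
- exact: rmorphN1.
- by rewrite rmorphD IHa IHb.
- by rewrite rmorphM IHa IHb.
Qed.

Definition esum (s : seq expr) := foldr EAdd EZero s.
Definition eprod (s : seq expr) := foldr EMul EOne s.
Definition eoneminus (f : expr) := EAdd EOne (EMul EMinusOne f).

Lemma eval_esum (A : comNzRingType) (env : nat -> A) s :
  eval_expr env (esum s) = \sum_(f <- s) eval_expr env f.
Proof. by elim: s => [|f s IH]; rewrite ?big_nil ?big_cons //= IH. Qed.

Lemma eval_eprod (A : comNzRingType) (env : nat -> A) s :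
  eval_expr env (eprod s) = \prod_(f <- s) eval_expr env f.
Proof. by elim: s => [|f s IH]; rewrite ?big_nil ?big_cons //= IH. Qed.

Lemma eval_eoneminus (A : comNzRingType) (env : nat -> A) f :
  eval_expr env (eoneminus f) = 1 - eval_expr env f.
Proof. by rewrite /= mulN1r. Qed.

Lemma expr_size_esum (s : seq expr) (B : nat) : all (fun f => expr_size f <= B)%N s ->
  (expr_size (esum s) <= size s * B.+1 + 1)%N.
Proof. by elim: s => [|f s IH] //= /andP[f_le /IH]; lia. Qed.

Lemma expr_size_eprod (s : seq expr) (B : nat) : all (fun f => expr_size f <= B)%N s ->
  (expr_size (eprod s) <= size s * B.+1 + 1)%N.
Proof. by elim: s => [|f s IH] //= /andP[f_le /IH]; lia. Qed.

End Expressions.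

Section CertificatePolynomial.
Local Open Scope ring_scope.
Variables (n : nat) (phi : cnf n).

Definition clause_vars (c : clause n) : {set 'I_n} := [set l.1 | l in c].

Definition agree (A : comNzRingType) (a b : A) := a * b + (1 - a) * (1 - b).

Section Values.
Variables (A : comNzRingType) (e x : 'I_n -> A).

Definition clause_val (c : clause n) : A :=
  \prod_(l in c) (if l.2 then 1 - e l.1 else e l.1).

Definition cert_term (k : nat) : A :=
  clause_val (nth set0 phi k) * \prod_(k' < k) (1 - clause_val (nth set0 phi k'))
  * \prod_(j < n) (if j \in clause_vars (nth set0 phi k) then 1 else agree (e j) (x j)).

Definition cert_sum (y : 'I_(size phi) -> A) : A :=
  \sum_(k < size phi) y k * cert_term k.

End Values.

Lemma rmorph_clause_val (A B : comNzRingType) (f : {rmorphism A -> B}) e c :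
  f (clause_val e c) = clause_val (f \o e) c.
Proof.
by rewrite rmorph_prod; apply: eq_bigr => l _; case: l.2; rewrite //= rmorphB rmorph1.
Qed.

Lemma rmorph_cert_term (A B : comNzRingType) (f : {rmorphism A -> B}) e x k :
  f (cert_term e x k) = cert_term (f \o e) (f \o x) k.
Proof.
rewrite !rmorphM rmorph_clause_val !rmorph_prod; congr (_ * _ * _).
- by apply: eq_bigr => k' _; rewrite rmorphB rmorph1 rmorph_clause_val.
- apply: eq_bigr => j _; case: (_ \in _); first exact: rmorph1.
  by rewrite rmorphD !rmorphM !rmorphB !rmorph1.
Qed.

Lemma rmorph_cert_sum (A B : comNzRingType) (f : {rmorphism A -> B}) e x y :
  f (cert_sum e x y) = cert_sum (f \o e) (f \o x) (f \o y).
Proof. by rewrite rmorph_sum; apply: eq_bigr => k _; rewrite rmorphM rmorph_cert_term. Qed.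

Lemma eq_cert_term (A : comNzRingType) (e e' x x' : 'I_n -> A) k :
  e =1 e' -> x =1 x' -> cert_term e x k = cert_term e' x' k.
Proof.
move=> ee' xx'; have eq_clause c : clause_val e c = clause_val e' c.
  by apply: eq_bigr => l _; rewrite ee'.
rewrite /cert_term eq_clause; congr (_ * _ * _).
- by apply: eq_bigr => k' _; rewrite eq_clause.
- by apply: eq_bigr => j _; rewrite ee' xx'.
Qed.

Lemma eq_cert_sum (A : comNzRingType) (e e' x x' : 'I_n -> A) (y y' : 'I_(size phi) -> A) :
  e =1 e' -> x =1 x' -> y =1 y' -> cert_sum e x y = cert_sum e' x' y'.
Proof. by move=> ee' xx' yy'; apply: eq_bigr => k _; rewrite yy' (eq_cert_term _ ee' xx'). Qed.

End CertificatePolynomial.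

Arguments cert_sum {n} phi {A} e x y.

Lemma telescope_prod_subr (A : comNzRingType) (a : nat -> A) m :
  (\sum_(k < m) a k * \prod_(k' < k) (1 - a k') = 1 - \prod_(k < m) (1 - a k))%R.
Proof.
elim: m => [|m IH]; first by rewrite !big_ord0 subrr.
by rewrite !big_ord_recr /= IH; ring.
Qed.

Section BooleanAssignments.
Local Open Scope ring_scope.
Variables (R : comNzRingType) (n : nat).

Definition indicator (a : 'I_n -> bool) : {mpoly R[n]} :=
  \prod_j (if a j then 'X_j else 1 - 'X_j).

Lemma sum_indicator : \sum_(a : {ffun 'I_n -> bool}) indicator a = 1.
Proof.
rewrite -(bigA_distr_bigA (fun j (b : bool) => if b then 'X_j else 1 - 'X_j)) /=.
by apply: big1 => j _; rewrite big_bool /= addrC subrK.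
Qed.

Variable a : 'I_n -> bool.
Let a_val j : {mpoly R[n]} := (a j)%:R.

Lemma clause_val_bool c : clause_val a_val c = (~~ sat_clause a c)%:R.
Proof.
rewrite /sat_clause /clause_val; have [[l l_in /eqP a_l]|unsat_c] := exists_inP.
  by rewrite (bigD1 l) //= /a_val a_l; case: l.2; rewrite ?subrr mul0r.
apply: big1 => -[j b] l_in /=.
have : a j != b by apply/eqP => a_j; apply: unsat_c; exists (j, b); rewrite ?a_j.
by rewrite /a_val; case: b {l_in}; case: (a j); rewrite ?subr0.
Qed.

(* Each literal of [c] is falsified by [a], so its factor in [C_c] is the
   factor of [indicator a] at its variable. *)
Lemma clause_poly_agree c : ~~ sat_clause a c ->
  clause_poly R c *
    \prod_j (if j \in clause_vars c then 1 else agree (a_val j) 'X_j) = indicator a.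
Proof.
move=> /exists_inPn a_falsifies.
have inj : {in c &, injective (fun l : literal n => l.1)}.
  move=> [j1 b1] [j2 b2] /a_falsifies /= a_b1 /a_falsifies /= a_b2 /= j12; subst j2.
  by move: a_b1 a_b2; case: b1; case: b2; case: (a j1).
have -> : clause_poly R c = \prod_(j in clause_vars c) (if a j then 'X_j else 1 - 'X_j).
  rewrite big_imset //=; apply: eq_bigr => -[j b] /a_falsifies /=.
  by case: b; case: (a j).
rewrite /indicator [RHS](bigID (mem (clause_vars c))) /=; congr (_ * _).
rewrite [RHS]big_mkcond /=; apply: eq_bigr => j _.
case: (j \in clause_vars c) => //=.
by rewrite /agree /a_val; case: (a j); rewrite /= ?subr0 ?subrr; ring.
Qed.

Lemma cert_sum_bool (phi : cnf n) : unsat phi ->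
  cert_sum phi a_val (fun j => 'X_j) (fun k => clause_poly R (nth set0 phi k)) = indicator a.
Proof.
move=> phi_unsat; pose cv k := clause_val a_val (nth set0 phi k).
transitivity (\sum_(k < size phi) cv k * \prod_(k' < k) (1 - cv k') * indicator a).
  apply: eq_bigr => k _; rewrite /cert_term.
  have [sat_k|unsat_k] := boolP (sat_clause a (nth set0 phi k)).
    by rewrite /cv clause_val_bool sat_k /= !mul0r mulr0.
  by rewrite /cv -(clause_poly_agree unsat_k); ring.
rewrite -big_distrl /= telescope_prod_subr.
suff -> : \prod_(k < size phi) (1 - cv k) = 0 by rewrite subr0 mul1r.
have /allPn[c c_in unsat_c] := phi_unsat a.
have c_idx : (index c phi < size phi)%N by rewrite index_mem.
by rewrite (bigD1 (Ordinal c_idx)) //= /cv clause_val_bool nth_index // unsat_c subrr mul0r.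
Qed.

End BooleanAssignments.

Section CertificateExpression.
Local Open Scope ring_scope.
Variables (n : nat) (phi : cnf n).
Local Notation m := (size phi).

Definition clause_expr (c : clause n) : expr :=
  eprod [seq if l.2 then eoneminus (EVar l.1) else EVar l.1 | l : literal n <- enum c].

Definition agree_expr (a b : expr) : expr :=
  EAdd (EMul a b) (EMul (eoneminus a) (eoneminus b)).

Definition cert_term_expr (k : nat) : expr :=
  EMul (EMul (clause_expr (nth set0 phi k))
             (eprod [seq eoneminus (clause_expr (nth set0 phi k')) | k' <- index_iota 0 k]))
       (eprod [seq if j \in clause_vars (nth set0 phi k) then EOne
                   else agree_expr (EVar j) (EVar (n + j)) | j <- enum 'I_n]).

(* The Boolean variable [e_j] is variable [j], [x_j] is [n + j], and the
   placeholder [y_k] is [n + (n + k)]. *)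
Definition cert_expr : expr :=
  esum [seq EMul (EVar (n + (n + k))) (cert_term_expr k) | k <- index_iota 0 m].

Lemma eval_clause_expr (A : comNzRingType) (env : nat -> A) c :
  eval_expr env (clause_expr c) = clause_val (fun j : 'I_n => env j) c.
Proof.
rewrite eval_eprod big_map big_enum; apply: eq_bigr => l _.
by case: l.2; rewrite ?eval_eoneminus.
Qed.

Lemma eval_cert_expr (A : comNzRingType) (env : nat -> A) :
  eval_expr env cert_expr =
  cert_sum phi (fun j : 'I_n => env j) (fun j : 'I_n => env (n + j))
           (fun k : 'I_m => env (n + (n + k))).
Proof.
rewrite eval_esum big_map big_mkord; apply: eq_bigr => k _.
rewrite /= eval_clause_expr !eval_eprod !big_map big_mkord -enumT big_enum /=.
congr (_ * (_ * _ * _)).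
  by apply: eq_bigr => k' _; rewrite mulN1r eval_clause_expr.
by apply: eq_big => // j _; case: (j \in _); rewrite //= !mulN1r.
Qed.

Local Open Scope nat_scope.

Lemma expr_size_clause_expr c : expr_size (clause_expr c) <= 12 * n + 1.
Proof.
have card_c : #|c| <= n * 2.
  by rewrite (leq_trans (max_card _)) // card_prod card_ord card_bool.
rewrite cardE in card_c.
apply: leq_trans (expr_size_eprod (B := 5) _) _.
  by rewrite all_map; apply/allP => l _ /=; case: l.2.
by rewrite size_map; move: card_c; set s := size _; lia.
Qed.

Lemma expr_size_cert_term_expr k : k <= m ->
  expr_size (cert_term_expr k) <= m * (12 * n + 6) + 28 * n + 5.
Proof.
move=> le_km; rewrite /=.
have := expr_size_clause_expr (nth set0 phi k).
have : expr_size (eprod [seq eoneminus (clause_expr (nth set0 phi k')) | k' <- index_iota 0 k])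
    <= m * (12 * n + 6) + 1.
  apply: leq_trans (expr_size_eprod (B := 12 * n + 5) _) _.
    rewrite all_map; apply/allP => k' _ /=.
    by have := expr_size_clause_expr (nth set0 phi k'); lia.
  by rewrite size_map size_iota subn0; nia.
have : expr_size (eprod [seq if j \in clause_vars (nth set0 phi k) then EOne
                   else agree_expr (EVar j) (EVar (n + j)) | j <- enum 'I_n]) <= 16 * n + 1.
  apply: leq_trans (expr_size_eprod (B := 15) _) _.
    by rewrite all_map; apply/allP => j _ /=; case: (_ \in _).
  by rewrite size_map size_enum_ord; nia.
set rest := expr_size (eprod _); set pre := expr_size (eprod _).
set cl := expr_size (clause_expr _); lia.
Qed.

Lemma expr_size_cert_expr : expr_size cert_expr <= m.+1 * m.+1 * (40 * n + 40).
Proof.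
apply: leq_trans (expr_size_esum (B := m * (12 * n + 6) + 28 * n + 7) _) _; last first.
  by rewrite size_map size_iota subn0; nia.
rewrite all_map; apply/allP => k; rewrite mem_iota add0n subn0 => /andP[_ lt_km].
by have := expr_size_cert_term_expr (ltnW lt_km); rewrite /=; lia.
Qed.

End CertificateExpression.

Lemma split_lshift m p (i : 'I_m) : split (lshift p i) = inl i.
Proof. exact: (unsplitK (inl i)). Qed.

Lemma split_rshift m p (i : 'I_p) : split (rshift m i) = inr i.
Proof. exact: (unsplitK (inr i)). Qed.

Section MpolySubstitution.
Variables (R : comNzRingType) (k k' : nat).

Lemma in_var_ord (i : 'I_k) : in_var R k i = 'X_i.
Proof. by rewrite /in_var valK. Qed.

Lemma comp_mpolyX_mktuple (F : 'I_k -> {mpoly R[k']}) (i : 'I_k) :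
  'X_i \mPo [tuple F j | j < k] = F i.
Proof. by rewrite comp_mpolyXU -tnth_nth tnth_mktuple. Qed.

End MpolySubstitution.

Section Certificate.
Local Open Scope ring_scope.
Variables (R : comNzRingType) (n : nat) (phi : cnf n).
Local Notation m := (size phi).

Definition cert_summand : {mpoly R[n + (n + (m + n))]} :=
  eval_expr (in_var R (n + (n + (m + n)))) (cert_expr phi).

Definition certificate : {mpoly R[n + (m + n)]} :=
  \sum_(a : {ffun 'I_n -> bool}) subst_bool a cert_summand.

Lemma subst_bool_cert_summand (a : {ffun 'I_n -> bool}) :
  subst_bool a cert_summand =
  cert_sum phi (fun j => (a j)%:R) (fun j => 'X_(lshift (m + n) j))
           (fun k => 'X_(rshift n (lshift n k))).
Proof.
rewrite /subst_bool /cert_summand rmorph_eval_expr eval_cert_expr.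
apply: eq_cert_sum => [j|j|k] /=.
- by rewrite (in_var_ord _ (lshift _ j)) comp_mpolyX_mktuple split_lshift.
- by rewrite (in_var_ord _ (rshift n (lshift _ j))) comp_mpolyX_mktuple split_rshift.
- rewrite (in_var_ord _ (rshift n (rshift n (lshift n k)))) comp_mpolyX_mktuple.
  by rewrite split_rshift.
Qed.

Definition cert_coef (i : 'I_(m + n)) : {mpoly R[n]} :=
  match split i with
  | inl k => \sum_(a : {ffun 'I_n -> bool}) cert_term phi (fun j => (a j)%:R) (fun j => 'X_j) k
  | inr _ => 0
  end.

Lemma certificate_linear :
  certificate = \sum_(i < m + n) 'X_(rshift n i) * x_embed (m + n) (cert_coef i).
Proof.
rewrite /certificate; under eq_bigr do rewrite subst_bool_cert_summand.
rewrite exchange_big big_split_ord /= [X in _ + X]big1 ?addr0; last first.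
  by move=> j _; rewrite /cert_coef split_rshift /x_embed comp_mpoly0 mulr0.
apply: eq_bigr => k _; rewrite /cert_coef split_lshift -mulr_sumr; congr (_ * _).
rewrite /x_embed raddf_sum; apply: eq_bigr => a _.
symmetry; apply: etrans (rmorph_cert_term phi (comp_mpoly _) _ _ k) _.
apply: eq_cert_term => j /=.
  by rewrite rmorph_nat.
by rewrite comp_mpolyX_mktuple.
Qed.

Lemma y_subst_certificate : unsat phi -> y_subst (@cnf_system R n phi) certificate = 1.
Proof.
move=> phi_unsat; rewrite -(sum_indicator R n) /certificate /y_subst raddf_sum.
apply: eq_bigr => a _; rewrite -(cert_sum_bool R a phi_unsat).
rewrite subst_bool_cert_summand.
apply: etrans (rmorph_cert_sum (comp_mpoly _) _ _ _) _; apply: eq_cert_sum => [j|j|k] /=.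
- by rewrite rmorph_nat.
- by rewrite comp_mpolyX_mktuple split_lshift.
- by rewrite comp_mpolyX_mktuple split_rshift /cnf_system split_lshift.
Qed.

End Certificate.

Lemma poly_bounded_cert_expr (phi : forall n, cnf n) :
  poly_bounded (fun n => size (phi n)) ->
  poly_bounded (fun n => expr_size (cert_expr (phi n))).
Proof.
move=> size_phi; apply: poly_bounded_le (fun n => expr_size_cert_expr (phi n)) _.
have size_phiS : poly_bounded (fun n => (size (phi n)).+1).
  by apply: poly_bounded_le (poly_boundedD size_phi (poly_bounded_cst 1)) => n; rewrite addn1.
apply: poly_boundedM; first exact: poly_boundedM.
have n_plus1 := poly_boundedD poly_bounded_id (poly_bounded_cst 1).
by apply: poly_bounded_le (poly_boundedM (poly_bounded_cst 40) n_plus1) => n; rewrite mulnDr.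
Qed.

Theorem lemma3p2 (R : comNzRingType) (phi : forall n : nat, cnf n)
  (Hsize : poly_bounded (fun n => size (phi n)))
  (Hunsat : forall n, unsat (phi n)) :
  exists C : forall n, {mpoly R[n + (size (phi n) + n)]},
    (forall n, @hilbert_like_cert R n (phi n) (C n)) /\
    @VNP0 R (fun n => (n + (size (phi n) + n))%N) C.
Proof.
exists (fun n => certificate R (phi n)); split.
  move=> n; split; last exact: y_subst_certificate.
  by exists (@cert_coef R n (phi n)); apply: certificate_linear.
have size_cert := poly_bounded_cert_expr Hsize.
exists id, (fun n => cert_summand R (phi n)); split=> //; first exact: poly_bounded_id.
split.
- exact: poly_boundedD poly_bounded_id
    (poly_boundedD poly_bounded_id (poly_boundedD Hsize poly_bounded_id)).
- apply: poly_bounded_le (poly_boundedM (poly_bounded_cst 2) size_cert) => n.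
  exact: (@msize_eval_expr R _ (cert_expr (phi n))).
- exists (fun n => expr_circuit 0 (cert_expr (phi n))); split.
    by apply: poly_bounded_le size_cert => n; rewrite size_expr_circuit.
  by move=> n; rewrite circuit_out_expr.
Qed.
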